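(* Let $G$ be a group, $a,b\in G$, and let $<$ be a bi-ordering of $G$ with $a>1$. Then $a^{b^2}(a^b)^{-1}a>1$ and $(a^{b^2})^{-1}a^ba^{-1}<1$.
   Context: Notation: $x^y=y^{-1}xy$. A bi-ordering is a strict total order on $G$ invariant under both left and right multiplication. *)

Record Group : Type := {
  carrier :> Type;
  gmul : carrier -> carrier -> carrier;
  gone : carrier;
  ginv : carrier -> carrier;
  gmulA : forall x y z, gmul x (gmul y z) = gmul (gmul x y) z;
  gmul1 : forall x, gmul gone x = x;
  gmulV : forall x, gmul (ginv x) x = gone
}.

Arguments gmul {g} _ _.
Arguments gone {g}.
Arguments ginv {g} _.

(* conjugation: x^y = y^{-1} x y *)
Definition gconj {G : Group} (x y : G) : G := gmul (gmul (ginv y) x) y.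

Definition bi_ordering (G : Group) (lt : G -> G -> Prop) : Prop :=
  (forall x, ~ lt x x) /\
  (forall x y z, lt x y -> lt y z -> lt x z) /\
  (forall x y, x <> y -> lt x y \/ lt y x) /\
  (forall x y z, lt x y -> lt (gmul z x) (gmul z y)) /\
  (forall x y z, lt x y -> lt (gmul x z) (gmul y z)).

(* Write c = a^b and d = a^(b^2) = c^b.  Conjugation by b preserves the order, so
   a <= c forces c <= d, and c < a forces d < c.  In the first case the two
   elements are (d c^-1) a and (d^-1 c) a^-1, in the second d (c^-1 a) and
   d^-1 (c a^-1); either way each is a product of two factors on the correct
   side of 1, one of them strictly. *)

From Stdlib Require Import Classical.

Section GroupLaws.
Variable G : Group.

Lemma gmulV_r (x : G) : gmul x (ginv x) = gone.
Proof.
  rewrite <- (gmul1 G (gmul x (ginv x))), <- (gmulV G (ginv x)) at 1.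
  rewrite <- gmulA, (gmulA G (ginv x) x (ginv x)), gmulV, gmul1.
  apply gmulV.
Qed.

Lemma gmul1_r (x : G) : gmul x gone = x.
Proof. rewrite <- (gmulV G x), gmulA, gmulV_r, gmul1. reflexivity. Qed.

Lemma ginv_unique (x y : G) : gmul x y = gone -> ginv x = y.
Proof.
  intro Exy.
  rewrite <- (gmul1_r (ginv x)), <- Exy, gmulA, gmulV, gmul1.
  reflexivity.
Qed.

Lemma ginvM (x y : G) : ginv (gmul x y) = gmul (ginv y) (ginv x).
Proof.
  apply ginv_unique.
  rewrite <- !gmulA, (gmulA G y (ginv y)), gmulV_r, gmul1, gmulV_r.
  reflexivity.
Qed.

Lemma gconjM (x y z : G) : gconj x (gmul y z) = gconj (gconj x y) z.
Proof. unfold gconj. rewrite ginvM, !gmulA. reflexivity. Qed.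

Lemma gconj1 (y : G) : gconj gone y = gone.
Proof. unfold gconj. rewrite gmul1_r, gmulV. reflexivity. Qed.

End GroupLaws.

Section BiOrdering.
Variables (G : Group) (lt : G -> G -> Prop).
Hypothesis Hlt : bi_ordering G lt.

Definition le (x y : G) : Prop := x = y \/ lt x y.

Lemma lt_trans (x y z : G) : lt x y -> lt y z -> lt x z.
Proof. destruct Hlt as [_ [Htrans _]]; eauto. Qed.

Lemma lt_mul2l (x y z : G) : lt x y -> lt (gmul z x) (gmul z y).
Proof. destruct Hlt as [_ [_ [_ [Hl _]]]]; eauto. Qed.

Lemma lt_mul2r (x y z : G) : lt x y -> lt (gmul x z) (gmul y z).
Proof. destruct Hlt as [_ [_ [_ [_ Hr]]]]; eauto. Qed.

Lemma le_or_gt (x y : G) : le x y \/ lt y x.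
Proof.
  destruct Hlt as [_ [_ [Htot _]]].
  destruct (classic (x = y)) as [Exy | Nxy].
  - left; left; exact Exy.
  - destruct (Htot x y Nxy); unfold le; auto.
Qed.

Lemma lt_conj (x y z : G) : lt x y -> lt (gconj x z) (gconj y z).
Proof. intro Lxy. unfold gconj. apply lt_mul2r, lt_mul2l, Lxy. Qed.

Lemma le_conj (x y z : G) : le x y -> le (gconj x z) (gconj y z).
Proof. intros [Exy | Lxy]; [left; congruence | right; apply lt_conj, Lxy]. Qed.

Lemma gt1_conj (x z : G) : lt gone x -> lt gone (gconj x z).
Proof. intro L1x. rewrite <- (gconj1 G z). apply lt_conj, L1x. Qed.

Lemma gt1_inv_lt1 (x : G) : lt gone x -> lt (ginv x) gone.
Proof.
  intro Lx. apply lt_mul2l with (z := ginv x) in Lx.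
  rewrite gmul1_r, gmulV in Lx. exact Lx.
Qed.

Lemma lt_divl_gt1 (x y : G) : lt x y -> lt gone (gmul (ginv x) y).
Proof.
  intro Lxy. apply lt_mul2l with (z := ginv x) in Lxy.
  rewrite gmulV in Lxy. exact Lxy.
Qed.

Lemma lt_divr_lt1 (x y : G) : lt x y -> lt (gmul x (ginv y)) gone.
Proof.
  intro Lxy. apply lt_mul2r with (z := ginv y) in Lxy.
  rewrite gmulV_r in Lxy. exact Lxy.
Qed.

Lemma le_divr_ge1 (x y : G) : le x y -> le gone (gmul y (ginv x)).
Proof.
  intros [Exy | Lxy].
  - left. rewrite Exy, gmulV_r. reflexivity.
  - right. apply lt_mul2r with (z := ginv x) in Lxy.
    rewrite gmulV_r in Lxy. exact Lxy.
Qed.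

Lemma le_divl_le1 (x y : G) : le x y -> le (gmul (ginv y) x) gone.
Proof.
  intros [Exy | Lxy].
  - left. rewrite Exy, gmulV. reflexivity.
  - right. apply lt_mul2l with (z := ginv y) in Lxy.
    rewrite gmulV in Lxy. exact Lxy.
Qed.

Lemma ge1_gt1_mul (x y : G) : le gone x -> lt gone y -> lt gone (gmul x y).
Proof.
  intros [E1x | L1x] L1y.
  - rewrite <- E1x, gmul1. exact L1y.
  - apply lt_trans with y; [exact L1y |].
    rewrite <- (gmul1 G y) at 1. apply lt_mul2r, L1x.
Qed.

Lemma le1_lt1_mul (x y : G) : le x gone -> lt y gone -> lt (gmul x y) gone.
Proof.
  intros [Ex1 | Lx1] Ly1.
  - rewrite Ex1, gmul1. exact Ly1.
  - apply lt_trans with y; [| exact Ly1].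
    rewrite <- (gmul1 G y) at 2. apply lt_mul2r, Lx1.
Qed.

End BiOrdering.

Theorem mainTheorem3 (G : Group) (lt : G -> G -> Prop) (a b : G)
  (Hlt : bi_ordering G lt) (Ha : lt gone a) :
  lt gone (gmul (gmul (gconj a (gmul b b)) (ginv (gconj a b))) a) /\
  lt (gmul (gmul (ginv (gconj a (gmul b b))) (gconj a b)) (ginv a)) gone.
Proof.
  rewrite gconjM. set (c := gconj a b). set (d := gconj c b).
  assert (Hc : lt gone c) by exact (gt1_conj G lt Hlt a b Ha).
  assert (Hd : lt gone d) by exact (gt1_conj G lt Hlt c b Hc).
  destruct (le_or_gt G lt Hlt a c) as [Hac | Hca].
  - assert (Hcd : le G lt c d) by exact (le_conj G lt Hlt a c b Hac).
    split.
    + apply (ge1_gt1_mul G lt Hlt); [apply (le_divr_ge1 G lt Hlt) |]; auto.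
    + apply (le1_lt1_mul G lt Hlt); [apply (le_divl_le1 G lt Hlt) |]; auto.
      apply (gt1_inv_lt1 G lt Hlt), Ha.
  - assert (Hdc : lt d c) by exact (lt_conj G lt Hlt c a b Hca).
    split; rewrite <- gmulA.
    + apply (ge1_gt1_mul G lt Hlt); [right; exact Hd |].
      apply (lt_divl_gt1 G lt Hlt), Hca.
    + apply (le1_lt1_mul G lt Hlt); [right; apply (gt1_inv_lt1 G lt Hlt), Hd |].
      apply (lt_divr_lt1 G lt Hlt), Hca.
Qed.
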